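(* Let $\{K(\cdot\mid\theta):\theta\in\Theta\}$ be a family of probability density functions on a space $X$, let $P_0$ be a probability distribution on $\Theta$, and let $(\theta_j)_{j\ge1}$ be independent and identically distributed with distribution $P_0$, independent of random weight sequences $\mathbf{w_1}=(w_{1j})_{j\ge1}$ and $\mathbf{w_2}=(w_{2j})_{j\ge1}$, where $w_{ij}\ge0$ and $\sum_{j}w_{ij}=1$ for $i=1,2$. Consider the random mixtures $f_i(x)=\sum_{j=1}^\infty w_{ij}\,K(x\mid\theta_j)$, $i=1,2$. Let $\alpha=\mathbb{E}\left\{\int_X K(x\mid\theta_j)^2\,dx\right\}$ and $\beta=\mathbb{E}\left\{\int_X K(x\mid\theta_j)K(x\mid\theta_k)\,dx\right\}$ for $j\neq k$ (these do not depend on $j,k$), and assume $\alpha<\infty$. Then $$\mathbb{E}\left[\,d_2(f_1,f_2)\mid \mathbf{w_1},\mathbf{w_2}\right]=(\alpha-\beta)\sum_{j=1}^\infty (w_{1j}-w_{2j})^2 .$$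
   Context: $d_2(f_1,f_2)=\int_X\left(f_1(x)-f_2(x)\right)^2dx$ (the squared $L_2$ distance, called the $L_2$ distance in the paper). *)

From HB Require Import structures.
From mathcomp Require Import all_boot all_order all_algebra.
From mathcomp Require Import all_classical all_reals all_analysis.
Set Implicit Arguments. Unset Strict Implicit. Unset Printing Implicit Defensive.
Import Order.TTheory GRing.Theory Num.Theory.
Local Open Scope classical_set_scope.
Local Open Scope ring_scope.

Definition iid_with_law {R : realType} {dO dT : measure_display}
  {Omega : measurableType dO} {Theta : measurableType dT}
  (P : probability Omega R) (P0 : probability Theta R)
  (theta : nat -> Omega -> Theta) : Prop :=
  (forall j, measurable_fun setT (theta j)) /\
  forall (J : seq nat) (A : nat -> set Theta),
    uniq J -> (forall j, measurable (A j)) ->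
    P (\bigcap_(j in [set` J]) (theta j @^-1` A j)) =
      (\prod_(j <- J) fine (P0 (A j)))%:E.

(* The random mixture f(x) = sum_j w_j K(x | theta_j) (as a real number;
   [fine] maps a divergent nonnegative series, i.e. +oo, to 0, which can only
   happen on a null set under the hypotheses of the lemma). *)
Definition mixture {R : realType} {dX dT : measure_display}
  {X : measurableType dX} {Theta : measurableType dT}
  (K : Theta -> X -> R) (w : nat -> R) (th : nat -> Theta) (x : X) : R :=
  fine (\sum_(j <oo) ((w j * K (th j) x)%:E))%E.

Definition d2 {R : realType} {dX : measure_display} {X : measurableType dX}
  (mu : {measure set X -> \bar R}) (f1 f2 : X -> R) : \bar R :=
  (\int[mu]_x ((f1 x - f2 x) ^+ 2)%:E)%E.

From HB Require Import structures.
From mathcomp Require Import all_boot all_order all_algebra.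
From mathcomp Require Import all_classical all_reals all_analysis.
From mathcomp Require Import ring measurable_realfun.
Set Implicit Arguments. Unset Strict Implicit. Unset Printing Implicit Defensive.
Import Order.TTheory GRing.Theory Num.Theory.
Local Open Scope classical_set_scope.
Local Open Scope ring_scope.
Local Open Scope ereal_scope.

(* By Tonelli, E int f_w f_v = sum_j sum_k w_j v_k E <K(.|theta_j), K(.|theta_k)>,
   and by the i.i.d. assumption the inner product has mean alpha for j = k and
   beta for j <> k.  As the weights sum to 1 this gives
   E int f_w f_v = beta + (alpha - beta) sum_j w_j v_j, and expanding
   (f_1 - f_2)^2 the beta terms cancel.  Since beta <= alpha < oo all these
   integrals are finite, so the mixtures are finite almost everywhere and the
   expansion is legitimate. *)

Section nonnegative_series.
Variable R : realType.
Implicit Types (a b : nat -> \bar R) (x : \bar R).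

Lemma nneseries_ge_term a k : (forall i, 0 <= a i) -> a k <= \sum_(i <oo) a i.
Proof.
move=> a0; rewrite (@nneseriesD1 _ _ k) //; apply: leeDl.
by apply: nneseries_ge0 => i _ _; exact: a0.
Qed.

Lemma ge0_nneseriesZl x a : 0 <= x -> (forall k, 0 <= a k) ->
  x * \sum_(k <oo) a k = \sum_(k <oo) (x * a k).
Proof.
case: x => [r| |] //= x0 a0; first by rewrite nneseriesZl.
have [a_eq0|/existsNP[k /eqP ak_neq0]] := pselect (forall k, a k = 0).
  by rewrite !eseries0 ?mule0 // => i _ _; rewrite a_eq0 ?mule0.
have ak_gt0 : 0 < a k by rewrite lt0e ak_neq0 a0.
rewrite gt0_mulye; last by apply: (lt_le_trans ak_gt0); exact: nneseries_ge_term.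
apply/esym/(@nneseries_pinfty _ _ _ k) => //; last exact: gt0_mulye.
by move=> n _; apply: mule_ge0.
Qed.

Lemma nneseriesM a b : (forall k, 0 <= a k) -> (forall k, 0 <= b k) ->
  (\sum_(j <oo) a j) * (\sum_(k <oo) b k) = \sum_(j <oo) \sum_(k <oo) (a j * b k).
Proof.
move=> a0 b0; rewrite muleC ge0_nneseriesZl //; last exact: nneseries_ge0.
by apply: eq_eseriesr => j _; rewrite muleC ge0_nneseriesZl.
Qed.

Lemma nneseries1 a n : (forall k, k != n -> a k = 0) -> 0 <= a n ->
  \sum_(k <oo) a k = a n.
Proof.
move=> a_eq0 an0; rewrite (@nneseriesD1 _ _ n) //; last first.
  by move=> k _; have [->//|/a_eq0 ->] := eqVneq k n.
by rewrite eseries0 ?adde0 // => i _ /= /a_eq0.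
Qed.

End nonnegative_series.

Lemma weight_le1 (R : realType) (w : nat -> R) :
  (forall j, 0 <= w j)%R -> \sum_(k <oo) (w k)%:E = 1 -> forall j, (w j <= 1)%R.
Proof.
move=> w_ge0 w_sum1 j; rewrite -lee_fin -w_sum1.
by apply: (@nneseries_ge_term _ (fun k => (w k)%:E)) => i; rewrite lee_fin.
Qed.

Section probability_weights.
Variables (R : realType) (w v : nat -> R).
Hypotheses (w_ge0 : forall j, (0 <= w j)%R) (v_ge0 : forall j, (0 <= v j)%R).
Hypotheses (w_sum1 : \sum_(j <oo) (w j)%:E = 1) (v_sum1 : \sum_(j <oo) (v j)%:E = 1).

Lemma fin_num_nneseries_weightsM : \sum_(j <oo) (w j * v j)%:E \is a fin_num.
Proof.
rewrite ge0_fin_numE; last by apply: nneseries_ge0 => i _ _; rewrite lee_fin mulr_ge0.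
apply: (@le_lt_trans _ _ (\sum_(j <oo) (w j)%:E)); last by rewrite w_sum1 ltry.
apply: lee_nneseries => [i _ _|i _]; first by rewrite lee_fin mulr_ge0.
by rewrite lee_fin ler_piMr // (weight_le1 v_ge0 v_sum1).
Qed.

Lemma nneseries_weights_diag (a b : R) : (0 <= b)%R -> (b <= a)%R ->
  \sum_(j <oo) \sum_(k <oo) ((w j * v k)%:E * (if j == k then a%:E else b%:E))
  = b%:E + (a - b)%:E * \sum_(j <oo) (w j * v j)%:E.
Proof.
move=> b0 ba; have ab0 : (0 <= a - b)%R by rewrite subr_ge0.
have row j : \sum_(k <oo) ((w j * v k)%:E * (if j == k then a%:E else b%:E))
    = b%:E * (w j)%:E + (a - b)%:E * (w j * v j)%:E.
  transitivity (\sum_(k <oo) ((w j * b)%:E * (v k)%:E +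
      (if k == j then (w j * v j * (a - b))%:E else 0))).
    apply: eq_eseriesr => k _; rewrite eq_sym.
    by have [->|_] := eqVneq j k; rewrite -!EFinM ?addr0; congr EFin; ring.
  rewrite nneseriesD; last 2 first.
  - by move=> i _ _; rewrite -EFinM lee_fin !mulr_ge0.
  - by move=> i _ _; case: ifP => // _; rewrite lee_fin !mulr_ge0.
  rewrite nneseriesZl; last by move=> i _; rewrite lee_fin.
  rewrite v_sum1 mule1 (@nneseries1 _ _ j) ?eqxx ?lee_fin ?mulr_ge0//; last first.
    by move=> k /negbTE ->.
  by rewrite -!EFinM -!EFinD; congr EFin; ring.
rewrite (eq_eseriesr (fun j _ => row j)) nneseriesD; last 2 first.
- by move=> i _ _; rewrite -EFinM lee_fin !mulr_ge0.
- by move=> i _ _; rewrite -EFinM lee_fin !mulr_ge0.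
rewrite !nneseriesZl ?w_sum1 ?mule1 // => i _; rewrite lee_fin ?mulr_ge0 //.
Qed.

Lemma nneseries_weights_sqrB :
  \sum_(j <oo) ((w j - v j) ^+ 2)%:E =
  \sum_(j <oo) (w j * w j)%:E + \sum_(j <oo) (v j * v j)%:E
   - 2%:E * \sum_(j <oo) (w j * v j)%:E.
Proof.
have cross : \sum_(j <oo) (2 * (w j * v j))%:E = 2%:E * \sum_(j <oo) (w j * v j)%:E.
  rewrite -nneseriesZl; last by move=> i _; rewrite lee_fin mulr_ge0.
  by apply: eq_eseriesr => j _; rewrite EFinM.
have expand : \sum_(j <oo) ((w j - v j) ^+ 2)%:E + \sum_(j <oo) (2 * (w j * v j))%:E
   = \sum_(j <oo) (w j * w j)%:E + \sum_(j <oo) (v j * v j)%:E.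
  rewrite -!nneseriesD.
  - by apply: eq_eseriesr => j _; rewrite -!EFinD; congr EFin; ring.
  - by move=> i _ _; rewrite lee_fin !mulr_ge0.
  - by move=> i _ _; rewrite lee_fin !mulr_ge0.
  - by move=> i _ _; rewrite lee_fin sqr_ge0.
  - by move=> i _ _; rewrite lee_fin !mulr_ge0.
by rewrite -cross -expand addeK // cross fin_numM // fin_num_nneseries_weightsM.
Qed.

End probability_weights.

Section iid_sequence.
Context (R : realType) (dO dT : measure_display)
  (Omega : measurableType dO) (Theta : measurableType dT)
  (P : probability Omega R) (P0 : probability Theta R)
  (theta : nat -> Omega -> Theta) (theta_iid : iid_with_law P P0 theta).

Lemma iid_measurable j : measurable_fun setT (theta j).
Proof. by case: theta_iid. Qed.

Lemma iid_marginal j A : measurable A -> P (theta j @^-1` A) = P0 A.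
Proof.
move=> mA; case: theta_iid => _ /(_ [:: j] (fun _ => A)).
rewrite big_seq1 fineK ?fin_num_measure // => <- //.
congr (P _); apply/seteqP; split => [om Aom i /=|om /(_ j) /=].
  by rewrite mem_seq1 => /eqP ->.
by apply; rewrite mem_seq1.
Qed.

Lemma iid_pair_law j k A B : j != k -> measurable A -> measurable B ->
  P ((fun om => (theta j om, theta k om)) @^-1` (A `*` B)) = P0 A * P0 B.
Proof.
move=> jk mA mB; have kj : (k == j) = false by rewrite eq_sym (negbTE jk).
case: theta_iid => _ /(_ [:: j; k] (fun i => if i == j then A else B)).
rewrite /= inE jk big_cons big_seq1 eqxx kj EFinM !fineK ?fin_num_measure //.
move=> <- //; last by move=> i; case: ifP.
congr (P _); apply/seteqP; split => [om /= [Aj Bk] i|om /= jk_in].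
  by rewrite /= in_cons mem_seq1 => /orP[] /eqP ->; rewrite ?eqxx // kj.
split; first by have := jk_in j; rewrite eqxx; apply; rewrite /= in_cons eqxx.
by have := jk_in k; rewrite kj; apply; rewrite /= in_cons mem_seq1 eqxx orbT.
Qed.

Lemma iid_integral (j : nat) (g : Theta -> \bar R) :
  measurable_fun setT g -> (forall t, 0 <= g t) ->
  \int[P]_om g (theta j om) = \int[P0]_t g t.
Proof.
move=> mg g0; have mj := iid_measurable j.
have := ge0_integral_pushforward mj P measurableT mg.
rewrite preimage_setT => <-; last by move=> t _; exact: g0.
by apply: eq_measure_integral => A mA _; exact: iid_marginal.
Qed.

Lemma iid_integral_pair (j k : nat) (g : Theta * Theta -> \bar R) : j != k ->
  measurable_fun setT g -> (forall p, 0 <= g p) ->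
  \int[P]_om g (theta j om, theta k om) = \int[(P0 \x P0)%E]_p g p.
Proof.
move=> jk mg g0.
have mjk := measurable_fun_pair (iid_measurable j) (iid_measurable k).
have := ge0_integral_pushforward mjk P measurableT mg.
rewrite preimage_setT => <-; last by move=> p _; exact: g0.
apply: eq_measure_integral => A mA _.
rewrite -(@product_measure_unique _ _ _ _ _ P0 P0) //.
by move=> A1 B1 mA1 mB1; exact: iid_pair_law.
Qed.

End iid_sequence.

Section mixture_moments.
Context (R : realType) (dX dT dO : measure_display)
  (X : measurableType dX) (Theta : measurableType dT) (Omega : measurableType dO)
  (mu : {sigma_finite_measure set X -> \bar R})
  (K : Theta -> X -> R)
  (K_meas : measurable_fun setT (fun p : X * Theta => K p.2 p.1))
  (K_ge0 : forall t x, (0 <= K t x)%R)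
  (P0 : probability Theta R) (P : probability Omega R)
  (theta : nat -> Omega -> Theta) (theta_iid : iid_with_law P P0 theta).

Definition kernel_dot (p : Theta * Theta) : \bar R :=
  \int[mu]_x (K p.1 x * K p.2 x)%:E.

Lemma kernel_dot_ge0 p : 0 <= kernel_dot p.
Proof. by apply: integral_ge0 => x _; rewrite lee_fin mulr_ge0. Qed.

Lemma measurable_kernel_dot : measurable_fun setT kernel_dot.
Proof.
apply: (measurable_fun_fubini_tonelli_F
  (fun q : (Theta * Theta) * X => (K q.1.1 q.2 * K q.1.2 q.2)%:E)); last first.
  by move=> q; rewrite lee_fin mulr_ge0.
apply/measurable_EFinP; apply: measurable_funM.
- apply: (measurableT_comp (f := fun p : X * Theta => K p.2 p.1)
    (g := fun q : (Theta * Theta) * X => (q.2, q.1.1))) => //.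
  apply: measurable_fun_pair => //.
  exact: measurableT_comp measurable_fst measurable_fst.
- apply: (measurableT_comp (f := fun p : X * Theta => K p.2 p.1)
    (g := fun q : (Theta * Theta) * X => (q.2, q.1.2))) => //.
  apply: measurable_fun_pair => //.
  exact: measurableT_comp measurable_snd measurable_fst.
Qed.

Definition kernel_alpha : \bar R := \int[P0]_t kernel_dot (t, t).
Definition kernel_beta : \bar R := \int[(P0 \x P0)%E]_p kernel_dot p.

Definition Ktheta j (z : Omega * X) : R := K (theta j z.1) z.2.

Lemma Ktheta_ge0 j z : (0 <= Ktheta j z)%R.
Proof. exact: K_ge0. Qed.

Lemma measurable_Ktheta j : measurable_fun setT (Ktheta j).
Proof.
apply: (measurableT_comp (f := fun p : X * Theta => K p.2 p.1)
  (g := fun z : Omega * X => (z.2, theta j z.1))) => //.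
apply: measurable_fun_pair => //.
exact: measurableT_comp (iid_measurable theta_iid j) measurable_fst.
Qed.

Lemma measurable_KthetaM j k :
  measurable_fun setT (fun z => (Ktheta j z * Ktheta k z)%:E).
Proof. by apply/measurable_EFinP; apply: measurable_funM; exact: measurable_Ktheta. Qed.

Lemma integral_kernel_dot_theta j k :
  \int[P]_om kernel_dot (theta j om, theta k om) =
  if j == k then kernel_alpha else kernel_beta.
Proof.
have [<-|jk] := eqVneq j k; last first.
  apply: (iid_integral_pair theta_iid jk); first exact: measurable_kernel_dot.
  exact: kernel_dot_ge0.
rewrite /kernel_alpha; apply: (iid_integral theta_iid j (g := fun t => kernel_dot (t, t))).
  apply: (measurableT_comp (f := kernel_dot) (g := fun t => (t, t))).
    exact: measurable_kernel_dot.
  exact: measurable_fun_pair.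
by move=> t; exact: kernel_dot_ge0.
Qed.

Lemma integral_KthetaM j k :
  \int[(P \x mu)%E]_z (Ktheta j z * Ktheta k z)%:E =
  if j == k then kernel_alpha else kernel_beta.
Proof.
rewrite -integral_kernel_dot_theta; apply: fubini_tonelli1.
  exact: measurable_KthetaM.
by move=> z; rewrite lee_fin mulr_ge0 // Ktheta_ge0.
Qed.

Lemma kernel_alpha_ge0 : 0 <= kernel_alpha.
Proof. by apply: integral_ge0 => t _; exact: kernel_dot_ge0. Qed.

Lemma kernel_beta_ge0 : 0 <= kernel_beta.
Proof. by apply: integral_ge0 => p _; exact: kernel_dot_ge0. Qed.

(* Integrate 2 K_0 K_1 <= K_0^2 + K_1^2 over Omega * X. *)
Lemma kernel_beta_le_alpha : kernel_beta <= kernel_alpha.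
Proof.
rewrite -(@lee_pmul2l _ 2%:E) // [X in _ <= X](mule_natl _ 2) mule2n.
have K00 := integral_KthetaM 0 0; have K11 := integral_KthetaM 1 1.
have K01 := integral_KthetaM 0 1; rewrite /= in K00 K11 K01.
rewrite -{1}K00 -K11 -K01.
have KK_ge0 j k z : 0 <= (Ktheta j z * Ktheta k z)%:E.
  by rewrite lee_fin mulr_ge0 // Ktheta_ge0.
rewrite -ge0_integralZl //; last exact: measurable_KthetaM.
rewrite -ge0_integralD //; try exact: measurable_KthetaM.
apply: ge0_le_integral => //.
- by move=> z _; rewrite mule_ge0.
- by apply: measurable_funeM; exact: measurable_KthetaM.
- by apply: emeasurable_funD; exact: measurable_KthetaM.
move=> z _; rewrite -EFinM -EFinD lee_fin -subr_ge0.
by rewrite (_ : _ - _ = (Ktheta 0 z - Ktheta 1 z) ^+ 2)%R ?sqr_ge0 //; ring.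
Qed.

Definition emixture (w : nat -> R) (z : Omega * X) : \bar R :=
  \sum_(j <oo) (w j * Ktheta j z)%:E.

Lemma emixture_ge0 w z : (forall j, 0 <= w j)%R -> 0 <= emixture w z.
Proof.
by move=> w_ge0; apply: nneseries_ge0 => j _ _; rewrite lee_fin mulr_ge0 // Ktheta_ge0.
Qed.

Lemma measurable_emixture w : (forall j, 0 <= w j)%R ->
  measurable_fun setT (emixture w).
Proof.
move=> w_ge0; apply: (@ge0_emeasurable_sum _ _ _ _ (fun j z => (w j * Ktheta j z)%:E) xpredT).
- by move=> j z _ _; rewrite lee_fin mulr_ge0 // Ktheta_ge0.
- move=> j _; apply/measurable_EFinP; apply: measurable_funM => //.
  exact: measurable_Ktheta.
Qed.

Lemma integral_emixtureM w v :
  (forall j, 0 <= w j)%R -> (forall j, 0 <= v j)%R ->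
  \int[(P \x mu)%E]_z (emixture w z * emixture v z) =
  \sum_(j <oo) \sum_(k <oo) ((w j * v k)%:E *
    (if j == k then kernel_alpha else kernel_beta)).
Proof.
move=> w_ge0 v_ge0.
have uK_ge0 u j z : (forall i, 0 <= u i)%R -> 0 <= (u j * Ktheta j z)%:E.
  by move=> u_ge0; rewrite lee_fin mulr_ge0 // Ktheta_ge0.
have term_ge0 j k z : 0 <= (w j * Ktheta j z)%:E * (v k * Ktheta k z)%:E.
  by rewrite mule_ge0 // uK_ge0.
have mwK u j : measurable_fun setT (fun z => (u j * Ktheta j z)%:E).
  by apply/measurable_EFinP; apply: measurable_funM => //; exact: measurable_Ktheta.
transitivity (\int[(P \x mu)%E]_z \sum_(j <oo) \sum_(k <oo)
    ((w j * Ktheta j z)%:E * (v k * Ktheta k z)%:E)).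
  by apply: eq_integral => z _; rewrite nneseriesM // => j; exact: uK_ge0.
rewrite integral_nneseries //; last 2 first.
- move=> j; apply: (@ge0_emeasurable_sum _ _ _ _
    (fun k z => (w j * Ktheta j z)%:E * (v k * Ktheta k z)%:E) xpredT).
    by move=> k z _ _; exact: term_ge0.
  by move=> k _; exact: emeasurable_funM.
- by move=> j z _; apply: nneseries_ge0 => k _ _; exact: term_ge0.
apply: eq_eseriesr => j _.
rewrite integral_nneseries //; last by move=> k; exact: emeasurable_funM.
apply: eq_eseriesr => k _; rewrite -integral_KthetaM -ge0_integralZl //; last 3 first.
- exact: measurable_KthetaM.
- by move=> z _; rewrite lee_fin mulr_ge0 // Ktheta_ge0.
- by rewrite lee_fin mulr_ge0.
by apply: eq_integral => z _; rewrite -!EFinM; congr EFin; ring.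
Qed.

Section finite_alpha.
Hypothesis alpha_fin : kernel_alpha \is a fin_num.

Let beta_fin : kernel_beta \is a fin_num.
Proof.
move: alpha_fin; rewrite !ge0_fin_numE ?kernel_alpha_ge0 ?kernel_beta_ge0 //.
exact: le_lt_trans kernel_beta_le_alpha.
Qed.

Section weights.
Variables w v : nat -> R.
Hypotheses (w_ge0 : forall j, (0 <= w j)%R) (v_ge0 : forall j, (0 <= v j)%R).
Hypotheses (w_sum1 : \sum_(j <oo) (w j)%:E = 1) (v_sum1 : \sum_(j <oo) (v j)%:E = 1).

Lemma integral_emixtureM_weights :
  \int[(P \x mu)%E]_z (emixture w z * emixture v z) =
  kernel_beta + (kernel_alpha - kernel_beta) * \sum_(j <oo) (w j * v j)%:E.
Proof.
rewrite integral_emixtureM // -(fineK alpha_fin) -(fineK beta_fin) -EFinB.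
apply: nneseries_weights_diag => //; first by rewrite fine_ge0 // kernel_beta_ge0.
by rewrite fine_le // kernel_beta_le_alpha.
Qed.

Lemma integrable_emixtureM :
  (P \x mu)%E.-integrable setT (fun z => emixture w z * emixture v z).
Proof.
apply/integrableP; split.
  by apply: emeasurable_funM; exact: measurable_emixture.
under eq_integral do rewrite gee0_abs ?mule_ge0 ?emixture_ge0 //.
rewrite integral_emixtureM_weights ltey_eq fin_numD beta_fin fin_numM //.
  by rewrite fin_numB alpha_fin beta_fin.
exact: fin_num_nneseries_weightsM.
Qed.

End weights.

Lemma emixture_fin_num_ae w : (forall j, 0 <= w j)%R ->
  \sum_(j <oo) (w j)%:E = 1 -> {ae (P \x mu)%E, forall z, emixture w z \is a fin_num}.
Proof.
move=> w_ge0 w_sum1.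
have := integrable_ae measurableT (integrable_emixtureM w_ge0 w_ge0 w_sum1 w_sum1).
apply: filterS => z /(_ I); have := emixture_ge0 z w_ge0.
by case: (emixture w z) => //=; rewrite mulyy.
Qed.


Lemma integral_emixture_sqrB w1 w2 :
  (forall j, 0 <= w1 j)%R -> (forall j, 0 <= w2 j)%R ->
  \sum_(j <oo) (w1 j)%:E = 1 -> \sum_(j <oo) (w2 j)%:E = 1 ->
  \int[(P \x mu)%E]_z (emixture w1 z * emixture w1 z + emixture w2 z * emixture w2 z
                        - 2%:E * (emixture w1 z * emixture w2 z))
  = (kernel_alpha - kernel_beta) * \sum_(j <oo) ((w1 j - w2 j) ^+ 2)%:E.
Proof.
move=> w1_ge0 w2_ge0 w1_sum1 w2_sum1.
have iF11 := integrable_emixtureM w1_ge0 w1_ge0 w1_sum1 w1_sum1.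
have iF22 := integrable_emixtureM w2_ge0 w2_ge0 w2_sum1 w2_sum1.
have iF12 := integrable_emixtureM w1_ge0 w2_ge0 w1_sum1 w2_sum1.
rewrite integralB ?integralD ?integralZl //; last 2 first.
- exact: integrableD.
- exact: integrableZl.
rewrite !integral_emixtureM_weights // nneseries_weights_sqrB //.
rewrite -(fineK alpha_fin) -(fineK beta_fin).
rewrite -(fineK (fin_num_nneseries_weightsM w1_ge0 w1_ge0 w1_sum1 w1_sum1)).
rewrite -(fineK (fin_num_nneseries_weightsM w2_ge0 w2_ge0 w2_sum1 w2_sum1)).
rewrite -(fineK (fin_num_nneseries_weightsM w1_ge0 w2_ge0 w1_sum1 w2_sum1)).
by rewrite -!EFinB -!EFinM; congr EFin; ring.
Qed.

Lemma integral_d2_mixture w1 w2 :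
  (forall j, 0 <= w1 j)%R -> (forall j, 0 <= w2 j)%R ->
  \sum_(j <oo) (w1 j)%:E = 1 -> \sum_(j <oo) (w2 j)%:E = 1 ->
  \int[P]_om d2 mu (mixture K w1 (fun j => theta j om))
                    (mixture K w2 (fun j => theta j om))
  = (kernel_alpha - kernel_beta) * \sum_(j <oo) ((w1 j - w2 j) ^+ 2)%:E.
Proof.
move=> w1_ge0 w2_ge0 w1_sum1 w2_sum1.
pose F1 := emixture w1; pose F2 := emixture w2.
pose h z := ((fine (F1 z) - fine (F2 z)) ^+ 2)%:E.
have mh : measurable_fun setT h.
  apply/measurable_EFinP; apply: measurable_funX; apply: measurable_funB;
    by apply: measurableT_comp => //; exact: measurable_emixture.
transitivity (\int[(P \x mu)%E]_z h z).
  by apply/esym/fubini_tonelli1 => // z; rewrite lee_fin sqr_ge0.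
pose Q z := F1 z * F1 z + F2 z * F2 z - 2%:E * (F1 z * F2 z).
have mQ : measurable_fun setT Q.
  apply: emeasurable_funB.
    by apply: emeasurable_funD; apply: emeasurable_funM; exact: measurable_emixture.
  by apply/measurable_funeM/emeasurable_funM; exact: measurable_emixture.
(* [fine] is harmless here: both mixtures are finite almost everywhere. *)
have h_aeQ : ae_eq (P \x mu)%E setT h Q.
  move: (emixture_fin_num_ae w1_ge0 w1_sum1) (emixture_fin_num_ae w2_ge0 w2_sum1).
  apply: filterS2 => z F1_fin F2_fin _.
  rewrite /h /Q /F1 /F2 -(fineK F1_fin) -(fineK F2_fin) /=.
  by rewrite -!EFinM -EFinD; congr EFin; ring.
rewrite (@ae_eq_integral _ _ _ (P \x mu)%E setT Q h measurableT mh mQ h_aeQ).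
exact: integral_emixture_sqrB.
Qed.

End finite_alpha.

Lemma kernel_alphaE :
  \int[P]_om \int[mu]_x ((K (theta 0 om) x) ^+ 2)%:E = kernel_alpha.
Proof.
have /= <- := integral_kernel_dot_theta 0 0.
by apply: eq_integral => om _; apply: eq_integral => x _; rewrite expr2.
Qed.

Lemma kernel_betaE :
  \int[P]_om \int[mu]_x ((K (theta 0 om) x * K (theta 1 om) x)%:E) = kernel_beta.
Proof. exact: (integral_kernel_dot_theta 0 1). Qed.

End mixture_moments.

Local Close Scope ereal_scope.

Theorem lemma2 (R : realType) (dX dT dO : measure_display)
  (X : measurableType dX) (Theta : measurableType dT) (Omega : measurableType dO)
  (mu : {sigma_finite_measure set X -> \bar R})
  (K : Theta -> X -> R)
  (K_meas : measurable_fun setT (fun p : X * Theta => K p.2 p.1))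
  (K_ge0 : forall t x, 0 <= K t x)
  (K_dens : forall t, (\int[mu]_x (K t x)%:E = 1)%E)
  (P0 : probability Theta R) (P : probability Omega R)
  (theta : nat -> Omega -> Theta)
  (theta_iid : iid_with_law P P0 theta)
  (w1 w2 : nat -> R)
  (w1_ge0 : forall j, 0 <= w1 j) (w2_ge0 : forall j, 0 <= w2 j)
  (w1_sum : (\sum_(j <oo) (w1 j)%:E = 1)%E)
  (w2_sum : (\sum_(j <oo) (w2 j)%:E = 1)%E)
  (alpha beta : \bar R)
  (alpha_def : alpha = (\int[P]_om \int[mu]_x ((K (theta 0%N om) x) ^+ 2)%:E)%E)
  (beta_def : beta =
     (\int[P]_om \int[mu]_x ((K (theta 0%N om) x * K (theta 1%N om) x)%:E))%E)
  (alpha_fin : (alpha < +oo)%E) :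
  (\int[P]_om d2 mu (mixture K w1 (fun j => theta j om))
                    (mixture K w2 (fun j => theta j om)))%E
  = ((alpha - beta) * \sum_(j <oo) (((w1 j - w2 j) ^+ 2)%:E))%E.
Proof.
rewrite alpha_def (kernel_alphaE mu K_meas K_ge0 theta_iid) in alpha_fin *.
rewrite beta_def (kernel_betaE mu K_meas K_ge0 theta_iid).
apply: integral_d2_mixture => //.
by rewrite ge0_fin_numE // kernel_alpha_ge0.
Qed.
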